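(* For every regular command $\mathsf{r}$ and all $P,Q\subseteq\Sigma$, the SIL triple $\langle P\rangle\,\mathsf{r}\,\langle Q\rangle$ is derivable in the SIL proof system if and only if it is valid, i.e. if and only if $\overleftarrow{[\![\mathsf{r}]\!]}Q\supseteq P$.
   Context: $\mathrm{Var}$ is a finite set of variables and $\Sigma=\mathrm{Var}\to\mathbb{Z}$ is the set of states. Regular commands: atomic commands $\mathsf{c}::=\mathtt{skip}\mid x:=a\mid b?$ (integer arithmetic expression $a$, Boolean expression $b$, evaluated as usual) and $\mathsf{r}::=\mathsf{c}\mid \mathsf{r};\mathsf{r}\mid\mathsf{r}\boxplus\mathsf{r}\mid\mathsf{r}^*$. For $S\subseteq\Sigma$: $[\![\mathtt{skip}]\!]S=S$, $[\![x:=a]\!]S=\{\sigma[x\mapsto[\![a]\!]\sigma]\mid\sigma\in S\}$, $[\![b?]\!]S=\{\sigma\in S\mid[\![b]\!]\sigma=\mathrm{true}\}$. Forward collecting semantics: $\overrightarrow{[\![\mathsf{c}]\!]}S=[\![\mathsf{c}]\!]S$, $\overrightarrow{[\![\mathsf{r}_1;\mathsf{r}_2]\!]}S=\overrightarrow{[\![\mathsf{r}_2]\!]}(\overrightarrow{[\![\mathsf{r}_1]\!]}S)$, $\overrightarrow{[\![\mathsf{r}_1\boxplus\mathsf{r}_2]\!]}S=\overrightarrow{[\![\mathsf{r}_1]\!]}S\cup\overrightarrow{[\![\mathsf{r}_2]\!]}S$, $\overrightarrow{[\![\mathsf{r}^*]\!]}S=\bigcup_{n\ge0}\overrightarrow{[\![\mathsf{r}]\!]}^nS$.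 Backward semantics: $\overleftarrow{[\![\mathsf{r}]\!]}\sigma'=\{\sigma\mid\sigma'\in\overrightarrow{[\![\mathsf{r}]\!]}\{\sigma\}\}$, lifted to sets by union. The SIL proof system derives triples $\langle P\rangle\,\mathsf{r}\,\langle Q\rangle$ ($P,Q\subseteq\Sigma$) with exactly the following rules: (atom) $\langle\overleftarrow{[\![\mathsf{c}]\!]}Q\rangle\,\mathsf{c}\,\langle Q\rangle$ for every atomic $\mathsf{c}$ and $Q$; (cons) from $P\subseteq P'$, $\langle P'\rangle\,\mathsf{r}\,\langle Q'\rangle$, $Q'\subseteq Q$ derive $\langle P\rangle\,\mathsf{r}\,\langle Q\rangle$; (seq) from $\langle P\rangle\,\mathsf{r}_1\,\langle R\rangle$ and $\langle R\rangle\,\mathsf{r}_2\,\langle Q\rangle$ derive $\langle P\rangle\,\mathsf{r}_1;\mathsf{r}_2\,\langle Q\rangle$; (choice) from $\langle P_1\rangle\,\mathsf{r}_1\,\langle Q\rangle$ and $\langle P_2\rangle\,\mathsf{r}_2\,\langle Q\rangle$ derive $\langle P_1\cup P_2\rangle\,\mathsf{r}_1\boxplus\mathsf{r}_2\,\langle Q\rangle$; (iter) from $\langle Q_{n+1}\rangle\,\mathsf{r}\,\langle Q_n\rangle$ for all $n\ge0$ (infinitely many premises) derive $\langle\bigcup_{n\ge0}Q_n\rangle\,\mathsf{r}^*\,\langle Q_0\rangle$. Derivations may be infinitely branching but are well-founded. *)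

From Stdlib Require Import ZArith List.
Open Scope Z_scope.

Section Lang.
Variable V : Type.
Variable V_eq_dec : forall x y : V, {x = y} + {x <> y}.

Definition state := V -> Z.
Definition pset := state -> Prop.

Definition upd (s : state) (x : V) (v : Z) : state :=
  fun y => if V_eq_dec x y then v else s y.

Inductive aexp : Type :=
| ANum (n : Z) | AVar (x : V)
| APlus (a1 a2 : aexp) | AMinus (a1 a2 : aexp) | AMult (a1 a2 : aexp).

Fixpoint aeval (s : state) (a : aexp) : Z :=
  match a with
  | ANum n => n | AVar x => s x
  | APlus a1 a2 => aeval s a1 + aeval s a2
  | AMinus a1 a2 => aeval s a1 - aeval s a2
  | AMult a1 a2 => aeval s a1 * aeval s a2
  end.

Inductive bexp : Type :=
| BTrue | BFalse | BEq (a1 a2 : aexp) | BLe (a1 a2 : aexp)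
| BNot (b : bexp) | BAnd (b1 b2 : bexp) | BOr (b1 b2 : bexp).

Fixpoint beval (s : state) (b : bexp) : bool :=
  match b with
  | BTrue => true | BFalse => false
  | BEq a1 a2 => Z.eqb (aeval s a1) (aeval s a2)
  | BLe a1 a2 => Z.leb (aeval s a1) (aeval s a2)
  | BNot b => negb (beval s b)
  | BAnd b1 b2 => andb (beval s b1) (beval s b2)
  | BOr b1 b2 => orb (beval s b1) (beval s b2)
  end.

Inductive atom : Type :=
| ASkip | AAssign (x : V) (a : aexp) | AGuard (b : bexp).

Inductive rcmd : Type :=
| RAtom (c : atom) | RSeq (r1 r2 : rcmd) | RChoice (r1 r2 : rcmd) | RStar (r : rcmd).

Definition atom_sem (c : atom) (S : pset) : pset :=
  match c with
  | ASkip => S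
  | AAssign x a => fun s' => exists s, S s /\ s' = upd s x (aeval s a)
  | AGuard b => fun s => S s /\ beval s b = true
  end.

Fixpoint iter_n (f : pset -> pset) (n : nat) (S : pset) : pset :=
  match n with O => S | Datatypes.S n' => f (iter_n f n' S) end.

Fixpoint fwd (r : rcmd) (S : pset) : pset :=
  match r with
  | RAtom c => atom_sem c S
  | RSeq r1 r2 => fwd r2 (fwd r1 S)
  | RChoice r1 r2 => fun s => fwd r1 S s \/ fwd r2 S s
  | RStar r => fun s => exists n, iter_n (fwd r) n S s
  end.

Definition singleton (s : state) : pset := fun t => t = s.

Definition bwd (r : rcmd) (Q : pset) : pset :=
  fun s => exists s', Q s' /\ fwd r (singleton s) s'.

Definition bwd_atom (c : atom) (Q : pset) : pset :=
  fun s => exists s', Q s' /\ atom_sem c (singleton s) s'.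

Definition subset (A B : pset) : Prop := forall s, A s -> B s.

Inductive sil : pset -> rcmd -> pset -> Prop :=
| sil_atom : forall c Q, sil (bwd_atom c Q) (RAtom c) Q
| sil_cons : forall P P' r Q Q', subset P P' -> sil P' r Q' -> subset Q' Q -> sil P r Q
| sil_seq : forall P R Q r1 r2, sil P r1 R -> sil R r2 Q -> sil P (RSeq r1 r2) Q
| sil_choice : forall P1 P2 Q r1 r2, sil P1 r1 Q -> sil P2 r2 Q ->
    sil (fun s => P1 s \/ P2 s) (RChoice r1 r2) Q
| sil_iter : forall (Qs : nat -> pset) r,
    (forall n, sil (Qs (Datatypes.S n)) r (Qs n)) ->
    sil (fun s => exists n, Qs n s) (RStar r) (Qs O).

End Lang.

Arguments ANum {V}. Arguments ASkip {V}. Arguments BTrue {V}.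

From Stdlib Require Import ZArith List.

(* The forward collecting semantics of every regular command is a monotone and
   "additive" transformer of state sets: every output state of [fwd r S] is
   already produced from a single input state of S.  Both properties survive
   iteration.  From them we compute the backward semantics compositionally:
     bwd (r1; r2) Q = bwd r1 (bwd r2 Q),   bwd (r1 ⊞ r2) Q = bwd r1 Q ∪ bwd r2 Q,
     bwd r* Q = ⋃_n B_n  with  B_0 = Q  and  B_(n+1) = bwd r B_n.
   Soundness (derivable ⇒ P ⊆ bwd r Q) is then an induction on derivations,
   using that bwd r is monotone in the postcondition.  Completeness follows
   from the fact that the triple ⟨bwd r Q⟩ r ⟨Q⟩ is derivable for all r, Q
   (induction on r; the star case applies (iter) to the family B_n), combined
   with the consequence rule. *)

Section Transformers.
Variable V : Type.

Definition monotone (f : pset V -> pset V) : Prop :=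
  forall A B, subset V A B -> subset V (f A) (f B).

Definition additive (f : pset V -> pset V) : Prop :=
  forall S u, f S u -> exists t, S t /\ f (singleton V t) u.

Lemma singleton_subset (S : pset V) t : S t -> subset V (singleton V t) S.
Proof. intros Ht s Hs; unfold singleton in Hs; subst; exact Ht. Qed.

Lemma iter_n_monotone f : monotone f -> forall n, monotone (iter_n V f n).
Proof. intros Hf n; induction n; intros A B H; simpl; auto. Qed.

Lemma iter_n_additive f :
  monotone f -> additive f -> forall n, additive (iter_n V f n).
Proof.
  intros Hm Ha n; induction n as [|n IH]; intros S u H; simpl in *.
  - exists u; split; [exact H | reflexivity].
  - destruct (Ha _ _ H) as [v [Hv Hfv]].
    destruct (IH _ _ Hv) as [t [Ht Hit]].
    exists t; split; [exact Ht |].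
    apply (Hm (singleton V v)); [apply singleton_subset|]; assumption.
Qed.

Lemma iter_n_succ_inner f n S :
  iter_n V f n (f S) = iter_n V f (Datatypes.S n) S.
Proof. induction n as [|n IH]; simpl; [reflexivity | now rewrite IH]. Qed.

End Transformers.

Section Semantics.
Variable V : Type.
Variable D : forall x y : V, {x = y} + {x <> y}.

Lemma fwd_monotone r : monotone V (fwd V D r).
Proof.
  induction r as [c | r1 IH1 r2 IH2 | r1 IH1 r2 IH2 | r IH]; intros A B H; simpl.
  - destruct c; simpl; intros s Hs.
    + auto.
    + destruct Hs as [s0 [Hs0 ->]]; eauto.
    + destruct Hs; auto.
  - apply IH2, IH1, H.
  - intros s [Hs | Hs]; [left; apply (IH1 A) | right; apply (IH2 A)]; auto.
  - intros s [n Hn]; exists n; apply (iter_n_monotone V _ IH n A); auto.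
Qed.

Lemma fwd_additive r : additive V (fwd V D r).
Proof.
  induction r as [c | r1 IH1 r2 IH2 | r1 IH1 r2 IH2 | r IH]; intros S u H; simpl in *.
  - destruct c; simpl in *.
    + exists u; split; [exact H | reflexivity].
    + destruct H as [s [Hs ->]]; exists s; split; [exact Hs |].
      exists s; split; reflexivity.
    + destruct H as [Hu Hb]; exists u; repeat split; assumption.
  - destruct (IH2 _ _ H) as [t [Ht Hr2]].
    destruct (IH1 _ _ Ht) as [s [Hs Hr1]].
    exists s; split; [exact Hs |].
    apply (fwd_monotone r2 (singleton V t)); [apply singleton_subset|]; assumption.
  - destruct H as [H | H];
      [destruct (IH1 _ _ H) as [t [Ht Hr]] | destruct (IH2 _ _ H) as [t [Ht Hr]]];
      exists t; split; auto.
  - destruct H as [n Hn].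
    destruct (iter_n_additive V _ (fwd_monotone r) IH n _ _ Hn) as [t [Ht Hr]].
    exists t; split; [exact Ht | exists n; exact Hr].
Qed.

Lemma bwd_monotone r : monotone V (bwd V D r).
Proof. intros A B H s [s' [Hs' Hr]]; exists s'; auto. Qed.

(* Backward semantics of sequencing is composition; additivity of r2 is needed
   for the forward direction. *)
Lemma bwd_seq r1 r2 Q s :
  bwd V D (RSeq V r1 r2) Q s <-> bwd V D r1 (bwd V D r2 Q) s.
Proof.
  split.
  - intros [u [Hu Hr]]; simpl in Hr.
    destruct (fwd_additive r2 _ _ Hr) as [t [Ht Hr2]].
    exists t; split; [exists u; split |]; assumption.
  - intros [t [[u [Hu Hr2]] Hr1]]; exists u; split; [exact Hu |]; simpl.
    apply (fwd_monotone r2 (singleton V t)); [apply singleton_subset|]; assumption.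
Qed.

Lemma bwd_choice r1 r2 Q s :
  bwd V D (RChoice V r1 r2) Q s <-> bwd V D r1 Q s \/ bwd V D r2 Q s.
Proof.
  split.
  - intros [u [Hu [Hr | Hr]]]; [left | right]; exists u; auto.
  - intros [[u [Hu Hr]] | [u [Hu Hr]]]; exists u; simpl; auto.
Qed.

Definition bwd_iter (r : rcmd V) (n : nat) (Q : pset V) : pset V :=
  fun s => exists s', Q s' /\ iter_n V (fwd V D r) n (singleton V s) s'.

Lemma bwd_iter_0 r Q s : bwd_iter r O Q s <-> Q s.
Proof.
  split.
  - intros [s' [Hs' Hr]]; simpl in Hr; unfold singleton in Hr; subst; exact Hs'.
  - intros Hs; exists s; split; [exact Hs | reflexivity].
Qed.

Lemma bwd_iter_succ r n Q s :
  bwd_iter r (Datatypes.S n) Q s <-> bwd V D r (bwd_iter r n Q) s.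
Proof.
  unfold bwd_iter; rewrite <- iter_n_succ_inner; split.
  - intros [u [Hu Hit]].
    destruct (iter_n_additive V _ (fwd_monotone r) (fwd_additive r) n _ _ Hit)
      as [t [Ht Hit']].
    exists t; split; [exists u; split |]; assumption.
  - intros [t [[u [Hu Hit]] Hr]]; exists u; split; [exact Hu |].
    apply (iter_n_monotone V _ (fwd_monotone r) n (singleton V t));
      [apply singleton_subset|]; assumption.
Qed.

Lemma bwd_star r Q s :
  bwd V D (RStar V r) Q s <-> exists n, bwd_iter r n Q s.
Proof.
  split.
  - intros [u [Hu [n Hn]]]; exists n, u; auto.
  - intros [n [u [Hu Hn]]]; exists u; split; [exact Hu | exists n; exact Hn].
Qed.

Lemma sil_sound P r Q : sil V D P r Q -> subset V P (bwd V D r Q).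
Proof.
  induction 1 as [c Q | P P' r Q Q' HP _ IH HQ | P R Q r1 r2 _ IH1 _ IH2
                 | P1 P2 Q r1 r2 _ IH1 _ IH2 | Qs r _ IH].
  - intros s Hs; exact Hs.
  - intros s Hs; apply (bwd_monotone r Q' Q HQ), IH, HP, Hs.
  - intros s Hs; apply bwd_seq.
    apply (bwd_monotone r1 R _ IH2), IH1, Hs.
  - intros s [Hs | Hs]; apply bwd_choice; [left | right]; auto.
  - assert (Hiter : forall n, subset V (Qs n) (bwd_iter r n (Qs O))).
    { intros n; induction n as [|n IHn]; intros s Hs.
      - apply bwd_iter_0; exact Hs.
      - apply bwd_iter_succ, (bwd_monotone r (Qs n) _ IHn), IH, Hs. }
    intros s [n Hn]; apply bwd_star; exists n; apply Hiter; exact Hn.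
Qed.

Lemma sil_pre P P' r Q : subset V P P' -> sil V D P' r Q -> sil V D P r Q.
Proof. intros HP H; apply (sil_cons V D P P' r Q Q); auto; intros s Hs; exact Hs. Qed.

Lemma sil_bwd_derivable r : forall Q, sil V D (bwd V D r Q) r Q.
Proof.
  induction r as [c | r1 IH1 r2 IH2 | r1 IH1 r2 IH2 | r IH]; intros Q.
  - exact (sil_atom V D c Q).
  - apply (sil_pre _ (bwd V D r1 (bwd V D r2 Q))); [intros s; apply bwd_seq |].
    apply (sil_seq V D _ (bwd V D r2 Q)); auto.
  - apply (sil_pre _ (fun s => bwd V D r1 Q s \/ bwd V D r2 Q s));
      [intros s; apply bwd_choice |].
    apply sil_choice; auto.
  - apply (sil_cons V D _ (fun s => exists n, bwd_iter r n Q s) _ _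
             (bwd_iter r O Q)).
    + intros s; apply bwd_star.
    + apply (sil_iter V D (fun n => bwd_iter r n Q)); intros n.
      apply (sil_pre _ (bwd V D r (bwd_iter r n Q))); [intros s; apply bwd_iter_succ | apply IH].
    + intros s; apply bwd_iter_0.
Qed.

End Semantics.

Theorem mainTheorem3 (V : Type) (V_eq_dec : forall x y : V, {x = y} + {x <> y})
  (V_fin : exists l : list V, forall x : V, In x l)
  (r : rcmd V) (P Q : pset V) :
  sil V V_eq_dec P r Q <-> subset V P (bwd V V_eq_dec r Q).
Proof.
  split.
  - apply sil_sound.
  - intros HP; apply (sil_pre V V_eq_dec P (bwd V V_eq_dec r Q)); [exact HP |].
    apply sil_bwd_derivable.
Qed.
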